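(* Let $a,b,c,d>0$, $\theta>0$ satisfy $-(\theta a+\theta^2 b)<(\theta-1)(\theta+1)^2<\theta c+\theta^2 d$, and consider on $\mathcal{I}=[0,1]^2$ the system $$\dot x=x(1-x)\big[xr(-c+d-a+b)+x(a-b)-r(d+b)+b\big]+\mu(1-2x),\qquad \dot r=r(1-r)\big[\theta x-(1-x)\big].$$ Then for every $\mu\in(0,1]$, all equilibria of the system lying on the boundary $\partial\mathcal{I}$ of the square are unstable. *)

From Stdlib Require Import Reals.
Open Scope R_scope.

Definition F1 (a b c d mu : R) (x r : R) : R :=
  x * (1 - x) * (x * r * (- c + d - a + b) + x * (a - b) - r * (d + b) + b)
  + mu * (1 - 2 * x).

Definition F2 (theta : R) (x r : R) : R :=
  r * (1 - r) * (theta * x - (1 - x)).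

Definition in_square (x r : R) : Prop := 0 <= x <= 1 /\ 0 <= r <= 1.

Definition on_boundary (x r : R) : Prop :=
  in_square x r /\ (x = 0 \/ x = 1 \/ r = 0 \/ r = 1).

Definition is_equilibrium (a b c d mu theta : R) (x r : R) : Prop :=
  F1 a b c d mu x r = 0 /\ F2 theta x r = 0.

Definition dist2 (x1 r1 x2 r2 : R) : R :=
  sqrt ((x1 - x2) ^ 2 + (r1 - r2) ^ 2).

Definition is_forward_solution (a b c d mu theta : R) (X Rr : R -> R) : Prop :=
  (forall t, 0 < t ->
     derivable_pt_lim X t (F1 a b c d mu (X t) (Rr t)) /\
     derivable_pt_lim Rr t (F2 theta (X t) (Rr t))) /\
  (forall eps, 0 < eps -> exists del, 0 < del /\
     forall t, 0 <= t < del -> Rabs (X t - X 0) < eps /\ Rabs (Rr t - Rr 0) < eps).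

Definition lyapunov_stable (a b c d mu theta : R) (x0 r0 : R) : Prop :=
  forall eps, 0 < eps -> exists del, 0 < del /\
    forall X Rr : R -> R,
      is_forward_solution a b c d mu theta X Rr ->
      in_square (X 0) (Rr 0) ->
      dist2 (X 0) (Rr 0) x0 r0 < del ->
      forall t, 0 <= t -> dist2 (X t) (Rr t) x0 r0 < eps.

Definition unstable (a b c d mu theta : R) (x0 r0 : R) : Prop :=
  ~ lyapunov_stable a b c d mu theta x0 r0.

From Stdlib Require Import Reals Factorial Lra Lia Psatz.
From Coquelicot Require Import Coquelicot.
Open Scope R_scope.

(* A boundary equilibrium has 0 < x < 1 (F1 = mu at x = 0, F1 = -mu at x = 1), hence
   r = 0 or r = 1.  On r = 0 the equilibrium equation is x(1-x)(ax + b(1-x)) = mu(2x-1);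
   its left side divided by 2x-1 decreases on (1/2,1), and the hypothesis on theta makes
   it exceed 1 >= mu at x = 1/(theta+1).  Thus x > 1/(theta+1), i.e. theta x - (1-x) > 0,
   and r is pushed away from the edge; on r = 1, symmetrically, theta x - (1-x) < 0.
   Refuting stability requires actual solutions.  Substituting r = 1/(1 + e^-z) turns
   the r-equation into z' = theta x - (1-x); clamping x to [0,1] makes the field bounded
   and globally Lipschitz, so Picard iteration gives a solution on [0,oo), and x stays in
   [0,1] because F1 points inward on x = 0 and x = 1.  A solution staying close to the
   equilibrium keeps z' bounded away from 0, so z grows linearly and r crosses 1/2. *)

Definition lipschitz (K : R) (h : R -> R) : Prop :=
  forall s t, Rabs (h s - h t) <= K * Rabs (s - t).

Lemma lipschitz_continuous K h t : lipschitz K h -> continuous h t.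
Proof.
  intros Hh. apply filterlim_locally. intros eps.
  assert (K_nonneg : 0 <= K).
  { specialize (Hh 1 0). rewrite Rminus_0_r, Rabs_R1 in Hh.
    pose proof (Rabs_pos (h 1 - h 0)). lra. }
  assert (del_pos : 0 < eps / (K + 1)) by (apply Rdiv_lt_0_compat; [apply cond_pos | lra]).
  exists (mkposreal _ del_pos). intros s Hs. change (Rabs (h s - h t) < eps).
  change (Rabs (s - t) < eps / (K + 1)) in Hs.
  apply Rle_lt_trans with (K * (eps / (K + 1))).
  - eapply Rle_trans; [apply Hh|]. apply Rmult_le_compat_l; lra.
  - apply Rlt_le_trans with ((K + 1) * (eps / (K + 1))); [nra|].
    right. field. lra.
Qed.

Lemma lipschitz_continuity_pt K h t : lipschitz K h -> continuity_pt h t.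
Proof. intros Hh. apply continuity_pt_filterlim, (lipschitz_continuous K), Hh. Qed.

Lemma lipschitz_const K c : 0 <= K -> lipschitz K (fun _ => c).
Proof. intros HK s t. rewrite Rminus_diag, Rabs_R0. pose proof (Rabs_pos (s - t)). nra. Qed.

Lemma lipschitz_comp K f g : lipschitz 1 f -> lipschitz K g -> lipschitz K (fun t => f (g t)).
Proof.
  intros Hf Hg s t. eapply Rle_trans; [apply Hf|]. rewrite Rmult_1_l. apply Hg.
Qed.

Lemma lipschitz_right_continuous K X Y : lipschitz K X -> lipschitz K Y ->
  forall eps, 0 < eps -> exists del, 0 < del /\
    forall t, 0 <= t < del -> Rabs (X t - X 0) < eps /\ Rabs (Y t - Y 0) < eps.
Proof.
  intros HX HY eps Heps. pose proof (Rabs_pos K). pose proof (Rle_abs K).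
  exists (eps / (Rabs K + 1)). split; [apply Rdiv_lt_0_compat; lra|].
  intros t Ht.
  assert (small : Rabs K * t < eps).
  { apply Rle_lt_trans with (Rabs K * (eps / (Rabs K + 1))); [apply Rmult_le_compat_l; lra|].
    apply Rlt_le_trans with ((Rabs K + 1) * (eps / (Rabs K + 1))); [|right; field; lra].
    apply Rmult_lt_compat_r; [apply Rdiv_lt_0_compat|]; lra. }
  specialize (HX t 0). specialize (HY t 0). rewrite Rminus_0_r, (Rabs_right t) in HX, HY by lra.
  split; nra.
Qed.

Lemma ex_RInt_of_continuous (h : R -> R) a b :
  (forall s, continuous h s) -> ex_RInt h a b.
Proof.
  intros Hh. apply (ex_RInt_continuous (V := R_CompleteNormedModule)). auto.
Qed.

Lemma RInt_lipschitz (h : R -> R) M :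
  (forall s, continuous h s) -> (forall s, Rabs (h s) <= M) ->
  lipschitz M (RInt h 0).
Proof.
  intros Hc Hb s t.
  assert (Hex : forall a b, ex_RInt h a b) by (intros; apply ex_RInt_of_continuous, Hc).
  rewrite <- (RInt_Chasles h 0 t s) by auto.
  change (Rabs (RInt h 0 t + RInt h t s - RInt h 0 t) <= M * Rabs (s - t)).
  rewrite Rplus_minus_l.
  destruct (Rle_dec t s) as [Hts | Hst].
  - rewrite (Rabs_right (s - t)), Rmult_comm by lra. apply abs_RInt_le_const; auto.
  - rewrite <- opp_RInt_swap by auto. change (Rabs (- RInt h s t) <= M * Rabs (s - t)).
    rewrite Rabs_Ropp, (Rabs_left (s - t)), Rmult_comm by lra.
    replace (- (s - t)) with (t - s) by ring. apply abs_RInt_le_const; auto; lra.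
Qed.

Lemma is_RInt_monomial K n t :
  is_RInt (fun s => K * s ^ n) 0 t (K * t ^ S n / INR (S n)).
Proof.
  assert (Sn_nz : INR (S n) <> 0) by (apply not_0_INR; lia).
  replace (K * t ^ S n / INR (S n))
    with (minus (K * t ^ S n / INR (S n)) (K * 0 ^ S n / INR (S n)))
    by (simpl; change (minus ?u ?v) with (u - v); field; auto).
  apply (is_RInt_derive (fun s => K * s ^ S n / INR (S n))).
  - intros s _. auto_derive; auto. field. auto.
  - intros s _. apply (continuous_mult (K := R_AbsRing)).
    + apply continuous_const.
    + apply (ex_derive_continuous (V := R_NormedModule)). auto_derive. auto.
Qed.

Lemma abs_RInt_le_monomial (h : R -> R) K n t :
  (forall s, continuous h s) -> 0 <= t ->
  (forall s, 0 <= s <= t -> Rabs (h s) <= K * s ^ n) ->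
  Rabs (RInt h 0 t) <= K * t ^ S n / INR (S n).
Proof.
  intros Hc Ht Hb.
  rewrite <- (is_RInt_unique _ _ _ _ (is_RInt_monomial K n t)).
  eapply Rle_trans; [apply abs_RInt_le; auto; apply ex_RInt_of_continuous, Hc|].
  apply RInt_le; auto.
  - apply ex_RInt_of_continuous. intros s.
    apply (continuous_comp h Rabs); [apply Hc | apply continuous_Rabs].
  - eexists. apply is_RInt_monomial.
  - intros s Hs. apply Hb. lra.
Qed.

Lemma Un_cv_le_eventually (u : nat -> R) l K n0 :
  Un_cv u l -> (forall m, (n0 <= m)%nat -> u m <= K) -> l <= K.
Proof.
  intros Hu Hb. apply Rnot_lt_le. intros HK.
  destruct (Hu (l - K)) as [N HN]; [lra|].
  specialize (HN (max N n0) ltac:(lia)). specialize (Hb (max N n0) ltac:(lia)).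
  unfold Rdist in HN. apply Rabs_lt_between in HN. lra.
Qed.

Lemma Un_cv_const c : Un_cv (fun _ => c) c.
Proof. intros eps Heps. exists 0%nat. intros. unfold Rdist. rewrite Rminus_diag, Rabs_R0. lra. Qed.

Lemma eq_0_of_abs_le_cv0 a (u : nat -> R) :
  Un_cv u 0 -> (forall n, Rabs a <= u n) -> a = 0.
Proof.
  intros Hu Hb. pose proof (@Rle_cv_lim (fun _ => Rabs a) u _ _ Hb (Un_cv_const (Rabs a)) Hu).
  pose proof (Rabs_pos a). apply Rabs_eq_0. lra.
Qed.

Definition exp_sum (x : R) (n : nat) : R :=
  sum_f_R0 (fun i => / INR (fact i) * x ^ i) n.

Lemma exp_sum_cv x : Un_cv (exp_sum x) (exp x).
Proof. exact (proj2_sig (exist_exp x)). Qed.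

Lemma exp_sum_S x n : exp_sum x (S n) = exp_sum x n + x ^ S n / INR (fact (S n)).
Proof. unfold exp_sum. rewrite tech5. unfold Rdiv. ring. Qed.

Lemma exp_sum_growing x : 0 <= x -> Un_growing (exp_sum x).
Proof.
  intros Hx n. rewrite exp_sum_S. pose proof (INR_fact_lt_0 (S n)).
  assert (0 <= x ^ S n / INR (fact (S n)))
    by (apply Rdiv_le_0_compat; [apply pow_le|]; lra).
  lra.
Qed.

Lemma exp_sum_le_exp x n : 0 <= x -> exp_sum x n <= exp x.
Proof. intros Hx. exact (growing_ineq _ _ (exp_sum_growing x Hx) (exp_sum_cv x) n). Qed.

Lemma Rmax_0_lipschitz : lipschitz 1 (Rmax 0).
Proof.
  intros s t. rewrite Rmult_1_l.
  unfold Rmax; destruct (Rle_dec 0 s), (Rle_dec 0 t); unfold Rabs;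
    repeat destruct Rcase_abs; lra.
Qed.

Lemma derivable_pt_lim_pos_left f c l a :
  derivable_pt_lim f c l -> 0 < l -> a < c -> exists u, a < u < c /\ f u < f c.
Proof.
  intros Hf Hl Hac. destruct (Hf l Hl) as [del Hdel].
  set (h := - Rmin (del / 2) ((c - a) / 2)).
  assert (h_neg : h < 0)
    by (unfold h; pose proof (cond_pos del); apply Ropp_lt_gt_0_contravar, Rmin_pos; lra).
  assert (h_small : - del < h /\ a - c < h).
  { unfold h. pose proof (cond_pos del). pose proof (Rmin_l (del / 2) ((c - a) / 2)).
    pose proof (Rmin_r (del / 2) ((c - a) / 2)). lra. }
  specialize (Hdel h ltac:(lra) ltac:(rewrite Rabs_left; lra)).
  apply Rabs_lt_between in Hdel.
  assert (slope_pos : 0 < (f (c + h) - f c) / h) by lra.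
  exists (c + h). split; [lra|].
  assert (drop : 0 < (f (c + h) - f c) / h * - h) by (apply Rmult_lt_0_compat; lra).
  replace ((f (c + h) - f c) / h * - h) with (f c - f (c + h)) in drop by (field; lra).
  lra.
Qed.

Lemma nonneg_barrier (h dh : R -> R) :
  (forall t, continuity_pt h t) -> 0 <= h 0 ->
  (forall t, 0 < t -> derivable_pt_lim h t (dh t)) ->
  (forall t, 0 < t -> h t <= 0 -> 0 < dh t) ->
  forall t, 0 <= t -> 0 <= h t.
Proof.
  intros Hc H0 Hd Hpush t Ht. apply Rnot_lt_le. intros Hneg.
  destruct (continuity_ab_min h 0 t Ht (fun c _ => Hc c)) as [m [Hmin Hm]].
  assert (hm_neg : h m < 0) by (specialize (Hmin t); lra).
  assert (m_pos : 0 < m) by (destruct (Req_dec m 0) as [->|]; lra).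
  destruct (derivable_pt_lim_pos_left h m (dh m) 0 (Hd m m_pos)
              (Hpush m m_pos ltac:(lra)) m_pos) as [u [Hu Hlt]].
  specialize (Hmin u ltac:(lra)). lra.
Qed.

Lemma linear_lower_bound (f df : R -> R) k T :
  0 <= T -> (forall t, continuity_pt f t) ->
  (forall t, 0 < t -> derivable_pt_lim f t (df t)) -> (forall t, 0 <= t -> k <= df t) ->
  k * T <= f T - f 0.
Proof.
  intros HT Hc Hd Hk. destruct (Req_dec T 0) as [->|HT0]; [lra|].
  destruct (MVT_gen f 0 T df) as [c [Hc' ->]].
  - intros t Ht. apply is_derive_Reals, Hd. rewrite Rmin_left in Ht; lra.
  - intros t _. apply Hc.
  - rewrite Rmin_left, Rmax_right in Hc' by lra.
    rewrite Rminus_0_r. apply Rmult_le_compat_r; [lra|]. apply Hk. lra.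
Qed.

Lemma eventually_nonneg_of_deriv_ge (f df : R -> R) k :
  0 < k -> (forall t, continuity_pt f t) ->
  (forall t, 0 < t -> derivable_pt_lim f t (df t)) -> (forall t, 0 <= t -> k <= df t) ->
  exists T, 0 <= T /\ 0 <= f T.
Proof.
  intros Hk Hc Hd Hdf. exists (Rabs (f 0) / k).
  assert (T_nonneg : 0 <= Rabs (f 0) / k) by (apply Rdiv_le_0_compat; [apply Rabs_pos | lra]).
  split; [assumption|].
  pose proof (linear_lower_bound f df k _ T_nonneg Hc Hd Hdf) as growth.
  replace (k * (Rabs (f 0) / k)) with (Rabs (f 0)) in growth by (field; lra).
  pose proof (Rle_abs (- f 0)). rewrite Rabs_Ropp in *. lra.
Qed.

Lemma derivable_pt_lim_of_integral_eq (Y g : R -> R) y0 t :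
  0 < t -> (forall s, continuous g s) -> (forall u, 0 <= u -> Y u = y0 + RInt g 0 u) ->
  derivable_pt_lim Y t (g t).
Proof.
  intros Ht Hg HY. apply is_derive_Reals.
  assert (near_t : locally t (fun u => y0 + RInt g 0 u = Y u)).
  { exists (mkposreal t Ht). intros u Hu. change (Rabs (u - t) < t) in Hu.
    apply Rabs_lt_between in Hu. symmetry. apply HY. lra. }
  apply (is_derive_ext_loc _ _ _ _ near_t).
  assert (D : is_derive (fun u => RInt g 0 u) t (g t)).
  { apply (is_derive_RInt _ _ 0); [|apply Hg].
    apply filter_forall. intros u. apply RInt_correct, ex_RInt_of_continuous, Hg. }
  pose proof (is_derive_plus (fun _ => y0) _ t zero _ (is_derive_const y0 t) D) as Dsum.
  rewrite plus_zero_l in Dsum. exact Dsum.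
Qed.

(** * Global solutions by Picard iteration *)

Definition bounded_by (M : R) (G : R -> R -> R) : Prop :=
  forall x z, Rabs (G x z) <= M.

Definition lipschitz2 (L : R) (G : R -> R -> R) : Prop :=
  forall x z x' z', Rabs (G x z - G x' z') <= L * (Rabs (x - x') + Rabs (z - z')).

Definition picard_step (G : R -> R -> R) (x0 : R) (X Z : R -> R) (t : R) : R :=
  x0 + RInt (fun s => G (X s) (Z s)) 0 t.

Definition sum_dist (X Z X' Z' : R -> R) (s : R) : R :=
  Rabs (X s - X' s) + Rabs (Z s - Z' s).

Lemma sum_dist_sym X Z X' Z' s : sum_dist X Z X' Z' s = sum_dist X' Z' X Z s.
Proof. unfold sum_dist. rewrite (Rabs_minus_sym (X s)), (Rabs_minus_sym (Z s)). reflexivity. Qed.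

Lemma sum_dist_triangle X Z X' Z' X'' Z'' s :
  sum_dist X Z X'' Z'' s <= sum_dist X Z X' Z' s + sum_dist X' Z' X'' Z'' s.
Proof.
  unfold sum_dist.
  pose proof (Rabs_triang (X s - X' s) (X' s - X'' s)).
  pose proof (Rabs_triang (Z s - Z' s) (Z' s - Z'' s)).
  replace (X s - X' s + (X' s - X'' s)) with (X s - X'' s) in * by ring.
  replace (Z s - Z' s + (Z' s - Z'' s)) with (Z s - Z'' s) in * by ring.
  lra.
Qed.

Section Picard.

Variables (M L : R).
Hypothesis L_pos : 0 < L.

Lemma comp_continuous G K X Z t :
  lipschitz2 L G -> lipschitz K X -> lipschitz K Z -> continuous (fun s => G (X s) (Z s)) t.
Proof.
  intros HG HX HZ. apply (lipschitz_continuous (L * (2 * K))). intros s u.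
  eapply Rle_trans; [apply HG|]. specialize (HX s u). specialize (HZ s u). nra.
Qed.

Lemma picard_step_at_0 G x0 X Z : picard_step G x0 X Z 0 = x0.
Proof. unfold picard_step. rewrite RInt_point. apply Rplus_0_r. Qed.

Lemma picard_step_lipschitz G x0 K X Z :
  bounded_by M G -> lipschitz2 L G -> lipschitz K X -> lipschitz K Z ->
  lipschitz M (picard_step G x0 X Z).
Proof.
  intros Hb HG HX HZ s t. unfold picard_step. rewrite Rminus_plus_l_l.
  apply RInt_lipschitz; intros; [apply (comp_continuous G K); auto | apply Hb].
Qed.

Lemma picard_step_diff G x0 K X Z X' Z' C n t :
  lipschitz2 L G -> lipschitz K X -> lipschitz K Z -> lipschitz K X' -> lipschitz K Z' ->
  0 <= t -> (forall s, 0 <= s <= t -> sum_dist X Z X' Z' s <= C * s ^ n) ->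
  Rabs (picard_step G x0 X Z t - picard_step G x0 X' Z' t) <= L * C * t ^ S n / INR (S n).
Proof.
  intros HG HX HZ HX' HZ' Ht Hd. unfold picard_step. rewrite Rminus_plus_l_l.
  assert (cont : forall s, continuous (fun s => G (X s) (Z s)) s /\
                           continuous (fun s => G (X' s) (Z' s)) s)
    by (split; apply (comp_continuous G K); auto).
  replace (RInt (fun s => G (X s) (Z s)) 0 t - RInt (fun s => G (X' s) (Z' s)) 0 t)
    with (RInt (fun s => G (X s) (Z s) - G (X' s) (Z' s)) 0 t)
    by (apply (RInt_minus (V := R_CompleteNormedModule));
        apply ex_RInt_of_continuous; apply cont).
  apply abs_RInt_le_monomial; auto.
  - intros s. apply (continuous_minus (V := R_NormedModule)); apply cont.
  - intros s Hs. rewrite Rmult_assoc. eapply Rle_trans; [apply HG|].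
    apply Rmult_le_compat_l; [lra|]. apply Hd, Hs.
Qed.

Variables (G1 G2 : R -> R -> R) (x0 z0 : R).
Hypotheses (G1_bdd : bounded_by M G1) (G2_bdd : bounded_by M G2)
           (G1_lip : lipschitz2 L G1) (G2_lip : lipschitz2 L G2).

Lemma M_nonneg : 0 <= M.
Proof. pose proof (Rabs_pos (G1 0 0)). pose proof (G1_bdd 0 0). lra. Qed.

Fixpoint picard (n : nat) : (R -> R) * (R -> R) :=
  match n with
  | O => (fun _ => x0, fun _ => z0)
  | S n => (picard_step G1 x0 (fst (picard n)) (snd (picard n)),
            picard_step G2 z0 (fst (picard n)) (snd (picard n)))
  end.

Definition picard_x (n : nat) : R -> R := fst (picard n).
Definition picard_z (n : nat) : R -> R := snd (picard n).

Lemma picard_x_S n : picard_x (S n) = picard_step G1 x0 (picard_x n) (picard_z n).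
Proof. reflexivity. Qed.

Lemma picard_z_S n : picard_z (S n) = picard_step G2 z0 (picard_x n) (picard_z n).
Proof. reflexivity. Qed.

Lemma picard_at_0 n : picard_x n 0 = x0 /\ picard_z n 0 = z0.
Proof.
  destruct n as [|n]; [split; reflexivity|].
  rewrite picard_x_S, picard_z_S, !picard_step_at_0. split; reflexivity.
Qed.

Lemma picard_lipschitz n : lipschitz M (picard_x n) /\ lipschitz M (picard_z n).
Proof.
  pose proof M_nonneg as HM. induction n as [|n [IHx IHz]].
  - split; [exact (lipschitz_const M x0 HM) | exact (lipschitz_const M z0 HM)].
  - rewrite picard_x_S, picard_z_S. split; apply (picard_step_lipschitz _ _ M); assumption.
Qed.

Lemma picard_increment n t : 0 <= t ->
  sum_dist (picard_x (S n)) (picard_z (S n)) (picard_x n) (picard_z n) t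
  <= M / L * ((2 * L * t) ^ S n / INR (fact (S n))).
Proof.
  revert t. induction n as [|n IH]; intros t Ht.
  - destruct (picard_lipschitz 1) as [HX HZ]. specialize (HX t 0). specialize (HZ t 0).
    destruct (picard_at_0 1) as [E1 E2]. rewrite E1 in HX. rewrite E2 in HZ.
    rewrite Rminus_0_r, (Rabs_right t) in HX, HZ by lra.
    unfold sum_dist. change (picard_x 0 t) with x0. change (picard_z 0 t) with z0.
    replace (M / L * ((2 * L * t) ^ 1 / INR (fact 1))) with (2 * (M * t))
      by (simpl; field; lra).
    lra.
  - set (C := M / L * (2 * L) ^ S n / INR (fact (S n))).
    assert (prev : forall s, 0 <= s <= t -> sum_dist (picard_x (S n)) (picard_z (S n))
                     (picard_x n) (picard_z n) s <= C * s ^ S n).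
    { intros s Hs. eapply Rle_trans; [apply IH; lra|]. right. unfold C.
      rewrite Rpow_mult_distr. field. split; [lra | apply INR_fact_neq_0]. }
    destruct (picard_lipschitz n) as [HXn HZn]. destruct (picard_lipschitz (S n)) as [HX HZ].
    pose proof (picard_step_diff G1 x0 M _ _ _ _ C (S n) t G1_lip HX HZ HXn HZn Ht prev) as D1.
    pose proof (picard_step_diff G2 z0 M _ _ _ _ C (S n) t G2_lip HX HZ HXn HZn Ht prev) as D2.
    rewrite <- !picard_x_S, <- !picard_z_S in *. unfold sum_dist.
    replace (M / L * ((2 * L * t) ^ S (S n) / INR (fact (S (S n)))))
      with (2 * (L * C * t ^ S (S n) / INR (S (S n)))).
    + lra.
    + unfold C. rewrite (fact_simpl (S n)), mult_INR, !Rpow_mult_distr. simpl pow.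
      pose proof (INR_fact_neq_0 (S n)). pose proof (not_0_INR (S (S n)) ltac:(lia)).
      field. lra.
Qed.

Lemma picard_cauchy_bound T n k s : 0 <= s <= T ->
  sum_dist (picard_x (n + k)) (picard_z (n + k)) (picard_x n) (picard_z n) s
  <= M / L * (exp_sum (2 * L * T) (n + k) - exp_sum (2 * L * T) n).
Proof.
  intros Hs. pose proof M_nonneg. induction k as [|k IH].
  - unfold sum_dist. rewrite Nat.add_0_r, !Rminus_diag, Rabs_R0. lra.
  - rewrite Nat.add_succ_r, exp_sum_S.
    eapply Rle_trans; [apply (sum_dist_triangle _ _ (picard_x (n + k)) (picard_z (n + k)))|].
    assert (step : (2 * L * s) ^ S (n + k) <= (2 * L * T) ^ S (n + k))
      by (apply pow_incr; nra).
    pose proof (INR_fact_lt_0 (S (n + k))).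
    pose proof (picard_increment (n + k) s ltac:(lra)).
    assert (M / L * ((2 * L * s) ^ S (n + k) / INR (fact (S (n + k))))
            <= M / L * ((2 * L * T) ^ S (n + k) / INR (fact (S (n + k))))).
    { apply Rmult_le_compat_l; [apply Rdiv_le_0_compat; lra|].
      apply Rmult_le_compat_r; [left; apply Rinv_0_lt_compat|]; lra. }
    lra.
Qed.

Lemma picard_uniformly_cauchy T : 0 <= T -> forall eps, 0 < eps -> exists N,
  forall n m, (N <= n)%nat -> (N <= m)%nat ->
    sum_dist (picard_x m) (picard_z m) (picard_x n) (picard_z n) T < eps.
Proof.
  intros HT eps Heps. pose proof M_nonneg.
  assert (ML_nonneg : 0 <= M / L) by (apply Rdiv_le_0_compat; lra).
  destruct (CV_Cauchy _ (exist _ _ (exp_sum_cv (2 * L * T))) (eps / (M / L + 1)))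
    as [N HN]; [apply Rdiv_lt_0_compat; lra|].
  exists N.
  assert (ordered : forall n m, (N <= n)%nat -> (n <= m)%nat ->
            sum_dist (picard_x m) (picard_z m) (picard_x n) (picard_z n) T < eps).
  { intros n m Hn Hnm. specialize (HN m n ltac:(lia) Hn). unfold Rdist in HN.
    replace m with (n + (m - n))%nat by lia.
    eapply Rle_lt_trans; [apply (picard_cauchy_bound T); lra|].
    replace (n + (m - n))%nat with m by lia.
    pose proof (Rle_abs (exp_sum (2 * L * T) m - exp_sum (2 * L * T) n)).
    apply Rle_lt_trans with ((M / L + 1) * Rabs (exp_sum (2 * L * T) m - exp_sum (2 * L * T) n)).
    - pose proof (Rabs_pos (exp_sum (2 * L * T) m - exp_sum (2 * L * T) n)). nra.
    - apply Rlt_le_trans with ((M / L + 1) * (eps / (M / L + 1))); [apply Rmult_lt_compat_l; lra|].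
      right. field. lra. }
  intros n m Hn Hm. destruct (Nat.le_ge_cases n m).
  - apply ordered; assumption.
  - rewrite sum_dist_sym. apply ordered; assumption.
Qed.

Lemma picard_cauchy t :
  Cauchy_crit (fun n => picard_x n (Rmax 0 t)) /\ Cauchy_crit (fun n => picard_z n (Rmax 0 t)).
Proof.
  pose proof (picard_uniformly_cauchy (Rmax 0 t) (Rmax_l 0 t)) as HC.
  split; intros eps Heps; destruct (HC eps Heps) as [N HN]; exists N; intros n m Hn Hm;
    specialize (HN m n Hm Hn); unfold sum_dist, Rdist in *;
    pose proof (Rabs_pos (picard_x n (Rmax 0 t) - picard_x m (Rmax 0 t)));
    pose proof (Rabs_pos (picard_z n (Rmax 0 t) - picard_z m (Rmax 0 t))); lra.
Qed.

(* The iterates are controlled only for t >= 0, so the limit is taken at [Rmax 0 t];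
   the solution is constant for t <= 0, which keeps it globally Lipschitz. *)
Definition sol_x (t : R) : R := proj1_sig (Rcomplete.R_complete _ (proj1 (picard_cauchy t))).
Definition sol_z (t : R) : R := proj1_sig (Rcomplete.R_complete _ (proj2 (picard_cauchy t))).

Lemma sol_cv t :
  Un_cv (fun n => picard_x n (Rmax 0 t)) (sol_x t) /\
  Un_cv (fun n => picard_z n (Rmax 0 t)) (sol_z t).
Proof. unfold sol_x, sol_z. split; apply proj2_sig. Qed.

Lemma sol_tail T n s : 0 <= s <= T ->
  sum_dist sol_x sol_z (picard_x n) (picard_z n) s
  <= M / L * (exp (2 * L * T) - exp_sum (2 * L * T) n).
Proof.
  intros Hs. pose proof M_nonneg.
  destruct (sol_cv s) as [Cx Cz]. rewrite Rmax_right in Cx, Cz by lra.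
  pose proof (CV_plus _ _ _ _
    (cv_cvabs _ _ (CV_minus _ _ _ _ Cx (Un_cv_const (picard_x n s))))
    (cv_cvabs _ _ (CV_minus _ _ _ _ Cz (Un_cv_const (picard_z n s))))) as C.
  apply (Un_cv_le_eventually _ _ _ n C). intros m Hm.
  replace m with (n + (m - n))%nat by lia.
  eapply Rle_trans; [apply (picard_cauchy_bound T); lra|].
  apply Rmult_le_compat_l; [apply Rdiv_le_0_compat; lra|].
  pose proof (exp_sum_le_exp (2 * L * T) (n + (m - n)) ltac:(nra)). lra.
Qed.

Lemma sol_lipschitz : lipschitz M sol_x /\ lipschitz M sol_z.
Proof.
  pose proof M_nonneg.
  assert (bound : forall s t, M * Rabs (Rmax 0 s - Rmax 0 t) <= M * Rabs (s - t)).
  { intros s t. apply Rmult_le_compat_l; [lra|].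
    pose proof (Rmax_0_lipschitz s t). lra. }
  split; intros s t.
  - pose proof (cv_cvabs _ _ (CV_minus _ _ _ _ (proj1 (sol_cv s)) (proj1 (sol_cv t)))) as C.
    apply (Un_cv_le_eventually _ _ _ 0 C). intros m _.
    eapply Rle_trans; [apply (picard_lipschitz m) | apply bound].
  - pose proof (cv_cvabs _ _ (CV_minus _ _ _ _ (proj2 (sol_cv s)) (proj2 (sol_cv t)))) as C.
    apply (Un_cv_le_eventually _ _ _ 0 C). intros m _.
    eapply Rle_trans; [apply (picard_lipschitz m) | apply bound].
Qed.

Lemma sol_at_0 : sol_x 0 = x0 /\ sol_z 0 = z0.
Proof.
  destruct (sol_cv 0) as [Cx Cz]. rewrite Rmax_left in Cx, Cz by lra.
  split; [apply (UL_sequence _ _ _ Cx) | apply (UL_sequence _ _ _ Cz)];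
    eapply Un_cv_ext; try apply Un_cv_const; intros n; symmetry; apply picard_at_0.
Qed.

Lemma sol_integral_error n t : 0 <= t ->
  Rabs (sol_x t - picard_step G1 x0 sol_x sol_z t)
    <= (M / L + M * t) * (exp (2 * L * t) - exp_sum (2 * L * t) n) /\
  Rabs (sol_z t - picard_step G2 z0 sol_x sol_z t)
    <= (M / L + M * t) * (exp (2 * L * t) - exp_sum (2 * L * t) n).
Proof.
  intros Ht. pose proof M_nonneg.
  set (e := exp (2 * L * t) - exp_sum (2 * L * t) n).
  assert (e_S : exp (2 * L * t) - exp_sum (2 * L * t) (S n) <= e)
    by (unfold e; pose proof (exp_sum_growing (2 * L * t) ltac:(nra) n); lra).
  assert (tail_S := sol_tail t (S n) t ltac:(lra)).
  assert (tail : forall s, 0 <= s <= t ->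
            sum_dist (picard_x n) (picard_z n) sol_x sol_z s <= M / L * e * s ^ 0)
    by (intros s Hs; rewrite sum_dist_sym, pow_O, Rmult_1_r; apply sol_tail; lra).
  destruct (picard_lipschitz n) as [HX HZ]. destruct sol_lipschitz as [SX SZ].
  pose proof (picard_step_diff G1 x0 M _ _ _ _ _ 0 t G1_lip HX HZ SX SZ Ht tail) as D1.
  pose proof (picard_step_diff G2 z0 M _ _ _ _ _ 0 t G2_lip HX HZ SX SZ Ht tail) as D2.
  rewrite <- picard_x_S in D1. rewrite <- picard_z_S in D2.
  replace (L * (M / L * e) * t ^ 1 / INR 1) with (M * t * e) in D1, D2 by (simpl; field; lra).
  assert (M / L * (exp (2 * L * t) - exp_sum (2 * L * t) (S n)) <= M / L * e)
    by (apply Rmult_le_compat_l; [apply Rdiv_le_0_compat|]; lra).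
  unfold sum_dist in tail_S.
  pose proof (Rabs_triang (sol_x t - picard_x (S n) t)
                (picard_x (S n) t - picard_step G1 x0 sol_x sol_z t)).
  pose proof (Rabs_triang (sol_z t - picard_z (S n) t)
                (picard_z (S n) t - picard_step G2 z0 sol_x sol_z t)).
  pose proof (Rabs_pos (sol_x t - picard_x (S n) t)).
  pose proof (Rabs_pos (sol_z t - picard_z (S n) t)).
  replace (sol_x t - picard_x (S n) t + (picard_x (S n) t - picard_step G1 x0 sol_x sol_z t))
    with (sol_x t - picard_step G1 x0 sol_x sol_z t) in * by ring.
  replace (sol_z t - picard_z (S n) t + (picard_z (S n) t - picard_step G2 z0 sol_x sol_z t))
    with (sol_z t - picard_step G2 z0 sol_x sol_z t) in * by ring.
  split; nra.
Qed.

Lemma sol_integral t : 0 <= t ->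
  sol_x t = picard_step G1 x0 sol_x sol_z t /\ sol_z t = picard_step G2 z0 sol_x sol_z t.
Proof.
  intros Ht.
  assert (err_cv : Un_cv (fun n => (M / L + M * t) * (exp (2 * L * t) - exp_sum (2 * L * t) n)) 0).
  { rewrite <- (Rmult_0_r (M / L + M * t)). apply CV_mult; [apply Un_cv_const|].
    rewrite <- (Rminus_diag (exp (2 * L * t))).
    apply CV_minus; [apply Un_cv_const | apply exp_sum_cv]. }
  split; apply Rminus_diag_uniq; apply (eq_0_of_abs_le_cv0 _ _ err_cv);
    intros n; apply (sol_integral_error n t Ht).
Qed.

Lemma sol_derivative t : 0 < t ->
  derivable_pt_lim sol_x t (G1 (sol_x t) (sol_z t)) /\
  derivable_pt_lim sol_z t (G2 (sol_x t) (sol_z t)).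
Proof.
  intros Ht. destruct sol_lipschitz as [SX SZ].
  split.
  - apply (derivable_pt_lim_of_integral_eq sol_x (fun s => G1 (sol_x s) (sol_z s)) x0 t Ht).
    + intros s. apply (comp_continuous _ M); assumption.
    + intros u Hu. apply (sol_integral u Hu).
  - apply (derivable_pt_lim_of_integral_eq sol_z (fun s => G2 (sol_x s) (sol_z s)) z0 t Ht).
    + intros s. apply (comp_continuous _ M); assumption.
    + intros u Hu. apply (sol_integral u Hu).
Qed.

End Picard.

Theorem picard_global_solution (G1 G2 : R -> R -> R) (M L x0 z0 : R) :
  0 < L -> bounded_by M G1 -> bounded_by M G2 -> lipschitz2 L G1 -> lipschitz2 L G2 ->
  exists X Z : R -> R, X 0 = x0 /\ Z 0 = z0 /\ lipschitz M X /\ lipschitz M Z /\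
    forall t, 0 < t -> derivable_pt_lim X t (G1 (X t) (Z t)) /\
                       derivable_pt_lim Z t (G2 (X t) (Z t)).
Proof.
  intros HL H1 H2 H1' H2'.
  destruct (sol_at_0 M L HL G1 G2 x0 z0 H1 H2 H1' H2') as [E1 E2].
  destruct (sol_lipschitz M L HL G1 G2 x0 z0 H1 H2 H1' H2') as [L1 L2].
  exists (sol_x M L HL G1 G2 x0 z0 H1 H2 H1' H2'), (sol_z M L HL G1 G2 x0 z0 H1 H2 H1' H2').
  repeat split; try assumption; apply sol_derivative; assumption.
Qed.

(** * The system in logistic coordinates *)

Definition logistic (z : R) : R := / (1 + exp (- z)).

Lemma logistic_range z : 0 < logistic z < 1.
Proof.
  unfold logistic. pose proof (exp_pos (- z)). split.
  - apply Rinv_0_lt_compat. lra.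
  - rewrite <- Rinv_1. apply Rinv_lt_contravar; lra.
Qed.

Lemma logistic_opp z : logistic (- z) = 1 - logistic z.
Proof.
  unfold logistic. rewrite Ropp_involutive, exp_Ropp. pose proof (exp_pos z).
  pose proof (Rinv_0_lt_compat _ (exp_pos z)).
  field. split; apply Rgt_not_eq; lra.
Qed.

Lemma logistic_derivative z : derivable_pt_lim logistic z (logistic z * (1 - logistic z)).
Proof.
  apply is_derive_Reals. unfold logistic. pose proof (exp_pos (- z)).
  auto_derive; [lra|]. field. lra.
Qed.

Lemma logistic_lipschitz : lipschitz 1 logistic.
Proof.
  intros z w.
  destruct (MVT_gen logistic w z (fun u => logistic u * (1 - logistic u))) as [c [_ ->]].
  - intros u _. apply is_derive_Reals, logistic_derivative.
  - intros u _. apply derivable_continuous_pt. eexists. apply logistic_derivative.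
  - rewrite Rabs_mult. apply Rmult_le_compat_r; [apply Rabs_pos|].
    pose proof (logistic_range c). rewrite Rabs_right; nra.
Qed.

Lemma logistic_le_exp z : logistic z <= exp z.
Proof.
  unfold logistic. rewrite exp_Ropp. pose proof (exp_pos z).
  replace (/ (1 + / exp z)) with (exp z / (exp z + 1)) by (field; lra).
  apply Rmult_le_reg_r with (exp z + 1); [lra|].
  unfold Rdiv. rewrite Rmult_assoc, Rinv_l, Rmult_1_r by lra. nra.
Qed.

Lemma logistic_ge_half z : 0 <= z -> 1 / 2 <= logistic z.
Proof.
  intros Hz. unfold logistic. rewrite exp_Ropp. pose proof (exp_ineq1_le z).
  assert (/ exp z <= 1) by (rewrite <- Rinv_1; apply Rinv_le_contravar; lra).
  pose proof (Rinv_0_lt_compat (exp z) (exp_pos z)).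
  unfold Rdiv. rewrite Rmult_1_l. apply Rinv_le_contravar; lra.
Qed.

Definition clamp01 (x : R) : R := Rmax 0 (Rmin 1 x).

Lemma clamp01_range x : 0 <= clamp01 x <= 1.
Proof. unfold clamp01, Rmax, Rmin. repeat destruct Rle_dec; lra. Qed.

Lemma clamp01_lipschitz : lipschitz 1 clamp01.
Proof.
  intros x y. rewrite Rmult_1_l. unfold clamp01, Rmax, Rmin.
  repeat destruct Rle_dec; unfold Rabs; repeat destruct Rcase_abs; lra.
Qed.

Lemma clamp01_id x : 0 <= x <= 1 -> clamp01 x = x.
Proof. unfold clamp01, Rmax, Rmin. repeat destruct Rle_dec; lra. Qed.

Lemma clamp01_le0 x : x <= 0 -> clamp01 x = 0.
Proof. unfold clamp01, Rmax, Rmin. repeat destruct Rle_dec; lra. Qed.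

Lemma clamp01_ge1 x : 1 <= x -> clamp01 x = 1.
Proof. unfold clamp01, Rmax, Rmin. repeat destruct Rle_dec; lra. Qed.

Definition lipschitz_on_square (f : R -> R -> R) : Prop :=
  exists M L, 0 <= M /\ 0 <= L /\ forall u v u' v', in_square u v -> in_square u' v' ->
    Rabs (f u v) <= M /\ Rabs (f u v - f u' v') <= L * (Rabs (u - u') + Rabs (v - v')).

Lemma lipschitz_on_square_const k : lipschitz_on_square (fun _ _ => k).
Proof.
  exists (Rabs k), 0. split; [apply Rabs_pos|]. split; [lra|]. intros. split; [lra|].
  rewrite Rminus_diag, Rabs_R0. lra.
Qed.

Lemma lipschitz_on_square_fst : lipschitz_on_square (fun u _ => u).
Proof.
  exists 1, 1. split; [lra|]. split; [lra|]. intros u v u' v' [Hu _] _. split.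
  - rewrite Rabs_right; lra.
  - pose proof (Rabs_pos (v - v')). lra.
Qed.

Lemma lipschitz_on_square_snd : lipschitz_on_square (fun _ v => v).
Proof.
  exists 1, 1. split; [lra|]. split; [lra|]. intros u v u' v' [_ Hv] _. split.
  - rewrite Rabs_right; lra.
  - pose proof (Rabs_pos (u - u')). lra.
Qed.

Lemma lipschitz_on_square_add f g :
  lipschitz_on_square f -> lipschitz_on_square g -> lipschitz_on_square (fun u v => f u v + g u v).
Proof.
  intros [M1 [L1 [HM1 [HL1 H1]]]] [M2 [L2 [HM2 [HL2 H2]]]].
  exists (M1 + M2), (L1 + L2). split; [lra|]. split; [lra|].
  intros u v u' v' S S'. destruct (H1 u v u' v' S S'), (H2 u v u' v' S S'). split.
  - eapply Rle_trans; [apply Rabs_triang | lra].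
  - replace (f u v + g u v - (f u' v' + g u' v'))
      with ((f u v - f u' v') + (g u v - g u' v')) by ring.
    eapply Rle_trans; [apply Rabs_triang|].
    pose proof (Rabs_pos (u - u')). pose proof (Rabs_pos (v - v')). nra.
Qed.

Lemma lipschitz_on_square_opp f : lipschitz_on_square f -> lipschitz_on_square (fun u v => - f u v).
Proof.
  intros [M [L [HM [HL H]]]]. exists M, L. split; [lra|]. split; [lra|].
  intros u v u' v' S S'. destruct (H u v u' v' S S'). split.
  - rewrite Rabs_Ropp. assumption.
  - replace (- f u v - - f u' v') with (- (f u v - f u' v')) by ring. rewrite Rabs_Ropp. assumption.
Qed.

Lemma lipschitz_on_square_mul f g :
  lipschitz_on_square f -> lipschitz_on_square g -> lipschitz_on_square (fun u v => f u v * g u v).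
Proof.
  intros [M1 [L1 [HM1 [HL1 H1]]]] [M2 [L2 [HM2 [HL2 H2]]]].
  exists (M1 * M2), (M1 * L2 + M2 * L1). split; [nra|]. split; [nra|].
  intros u v u' v' S S'. destruct (H1 u v u' v' S S') as [Bf Lf].
  destruct (H2 u v u' v' S S') as [Bg Lg]. destruct (H2 u' v' u v S' S) as [Bg' _]. split.
  - rewrite Rabs_mult. apply Rmult_le_compat; auto; apply Rabs_pos.
  - replace (f u v * g u v - f u' v' * g u' v')
      with (f u v * (g u v - g u' v') + g u' v' * (f u v - f u' v')) by ring.
    eapply Rle_trans; [apply Rabs_triang|]. rewrite !Rabs_mult.
    set (D := Rabs (u - u') + Rabs (v - v')).
    assert (Rabs (f u v) * Rabs (g u v - g u' v') <= M1 * (L2 * D))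
      by (apply Rmult_le_compat; auto; apply Rabs_pos).
    assert (Rabs (g u' v') * Rabs (f u v - f u' v') <= M2 * (L1 * D))
      by (apply Rmult_le_compat; auto; apply Rabs_pos).
    nra.
Qed.

Ltac solve_lipschitz_on_square :=
  repeat first [ apply lipschitz_on_square_add | apply lipschitz_on_square_mul
               | apply lipschitz_on_square_opp | apply lipschitz_on_square_fst
               | apply lipschitz_on_square_snd | apply lipschitz_on_square_const ].

Definition rate (theta x : R) : R := theta * x - (1 - x).

Lemma F1_lipschitz_on_square a b c d mu : lipschitz_on_square (F1 a b c d mu).
Proof. unfold F1, Rminus. solve_lipschitz_on_square. Qed.

Lemma rate_lipschitz_on_square theta : lipschitz_on_square (fun u _ => rate theta u).
Proof. unfold rate, Rminus. solve_lipschitz_on_square. Qed.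

Definition lift_to_plane (f : R -> R -> R) (x z : R) : R := f (clamp01 x) (logistic z).

Lemma lift_to_plane_regular f : lipschitz_on_square f ->
  exists M L, 0 <= M /\ 0 <= L /\ bounded_by M (lift_to_plane f) /\ lipschitz2 L (lift_to_plane f).
Proof.
  intros [M [L [HM [HL Hf]]]]. exists M, L. do 2 (split; [assumption|]).
  assert (in_sq : forall x z, in_square (clamp01 x) (logistic z))
    by (intros x z; split; [apply clamp01_range | pose proof (logistic_range z); lra]).
  split.
  - intros x z. apply (Hf _ _ _ _ (in_sq x z) (in_sq x z)).
  - intros x z x' z'. eapply Rle_trans; [apply (Hf _ _ _ _ (in_sq x z) (in_sq x' z'))|].
    apply Rmult_le_compat_l; [assumption|].
    pose proof (clamp01_lipschitz x x'). pose proof (logistic_lipschitz z z'). lra.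
Qed.

Lemma lifted_system_regular a b c d mu theta : exists M L, 0 < L /\
  bounded_by M (lift_to_plane (F1 a b c d mu)) /\
  bounded_by M (lift_to_plane (fun u _ => rate theta u)) /\
  lipschitz2 L (lift_to_plane (F1 a b c d mu)) /\
  lipschitz2 L (lift_to_plane (fun u _ => rate theta u)).
Proof.
  destruct (lift_to_plane_regular _ (F1_lipschitz_on_square a b c d mu))
    as [M1 [L1 [HM1 [HL1 [B1 L1']]]]].
  destruct (lift_to_plane_regular _ (rate_lipschitz_on_square theta))
    as [M2 [L2 [HM2 [HL2 [B2 L2']]]]].
  exists (M1 + M2), (L1 + L2 + 1). split; [lra|].
  repeat split; intros x z; try intros x' z'.
  - specialize (B1 x z). lra.
  - specialize (B2 x z). lra.
  - specialize (L1' x z x' z'). pose proof (Rabs_pos (x - x')). pose proof (Rabs_pos (z - z')). nra.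
  - specialize (L2' x z x' z'). pose proof (Rabs_pos (x - x')). pose proof (Rabs_pos (z - z')). nra.
Qed.

Lemma F1_at_0 a b c d mu r : F1 a b c d mu 0 r = mu.
Proof. unfold F1. ring. Qed.

Lemma F1_at_1 a b c d mu r : F1 a b c d mu 1 r = - mu.
Proof. unfold F1. ring. Qed.

Lemma lifted_solution_in_unit_interval a b c d mu (X Z : R -> R) K :
  0 < mu -> lipschitz K X -> 0 <= X 0 <= 1 ->
  (forall t, 0 < t -> derivable_pt_lim X t (lift_to_plane (F1 a b c d mu) (X t) (Z t))) ->
  forall t, 0 <= t -> 0 <= X t <= 1.
Proof.
  intros Hmu HX HX0 HdX t Ht. split.
  - apply (nonneg_barrier X (fun t => lift_to_plane (F1 a b c d mu) (X t) (Z t))); auto.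
    + intros s. apply (lipschitz_continuity_pt K), HX.
    + lra.
    + intros s _ Hs. unfold lift_to_plane. rewrite clamp01_le0, F1_at_0; assumption.
  - enough (0 <= 1 - X t) by lra.
    apply (nonneg_barrier (fun t => 1 - X t)
             (fun t => - lift_to_plane (F1 a b c d mu) (X t) (Z t))); auto.
    + intros s. apply (lipschitz_continuity_pt K). intros u v.
      replace (1 - X u - (1 - X v)) with (- (X u - X v)) by ring. rewrite Rabs_Ropp. apply HX.
    + lra.
    + intros s Hs. replace (- lift_to_plane (F1 a b c d mu) (X s) (Z s))
        with (0 - lift_to_plane (F1 a b c d mu) (X s) (Z s)) by ring.
      exact (derivable_pt_lim_minus (fct_cte 1) X s _ _ (derivable_pt_lim_const 1 s) (HdX s Hs)).
    + intros s _ Hs. unfold lift_to_plane. rewrite clamp01_ge1, F1_at_1 by lra. lra.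
Qed.

Lemma logistic_solution a b c d mu theta xs z0 : 0 < mu -> 0 <= xs <= 1 ->
  exists X Z : R -> R, X 0 = xs /\ Z 0 = z0 /\
    is_forward_solution a b c d mu theta X (fun t => logistic (Z t)) /\
    (forall t, continuity_pt Z t) /\
    (forall t, 0 < t -> derivable_pt_lim Z t (rate theta (X t))).
Proof.
  intros Hmu Hxs.
  destruct (lifted_system_regular a b c d mu theta) as [M [L [HL [B1 [B2 [L1 L2]]]]]].
  destruct (picard_global_solution _ _ M L xs z0 HL B1 B2 L1 L2)
    as [X [Z [HX0 [HZ0 [LX [LZ HD]]]]]].
  assert (in_unit : forall t, 0 <= t -> 0 <= X t <= 1).
  { apply (lifted_solution_in_unit_interval a b c d mu X Z M); auto.
    - rewrite HX0. assumption.
    - intros t Ht. apply HD, Ht. }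
  exists X, Z. split; [assumption|]. split; [assumption|]. split; [split|split].
  - intros t Ht. destruct (HD t Ht) as [DX DZ].
    unfold lift_to_plane in DX, DZ. rewrite clamp01_id in DX, DZ by (apply in_unit; lra).
    split; [exact DX|].
    exact (derivable_pt_lim_comp Z logistic t _ _ DZ (logistic_derivative (Z t))).
  - apply (lipschitz_right_continuous M); [assumption|].
    apply lipschitz_comp; [apply logistic_lipschitz | assumption].
  - intros t. apply (lipschitz_continuity_pt M), LZ.
  - intros t Ht. destruct (HD t Ht) as [_ DZ]. unfold lift_to_plane in DZ.
    rewrite clamp01_id in DZ by (apply in_unit; lra). exact DZ.
Qed.

(** * Boundary equilibria *)

Lemma dist2_fst x1 r1 x2 r2 : Rabs (x1 - x2) <= dist2 x1 r1 x2 r2.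
Proof.
  unfold dist2. rewrite <- sqrt_Rsqr_abs. apply sqrt_le_1_alt.
  unfold Rsqr. pose proof (pow2_ge_0 (r1 - r2)). lra.
Qed.

Lemma dist2_snd x1 r1 x2 r2 : Rabs (r1 - r2) <= dist2 x1 r1 x2 r2.
Proof.
  unfold dist2. rewrite <- sqrt_Rsqr_abs. apply sqrt_le_1_alt.
  unfold Rsqr. pose proof (pow2_ge_0 (x1 - x2)). lra.
Qed.

Lemma dist2_vert x r1 r2 : dist2 x r1 x r2 = Rabs (r1 - r2).
Proof. unfold dist2. rewrite <- sqrt_Rsqr_abs, Rminus_diag. f_equal. unfold Rsqr. ring. Qed.

Lemma logistic_dist_to_edge r0 z : r0 = 0 \/ r0 = 1 ->
  Rabs (logistic z - r0) = logistic ((1 - 2 * r0) * z).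
Proof.
  pose proof (logistic_range z).
  intros [-> | ->].
  - rewrite Rminus_0_r, Rmult_0_r, Rminus_0_r, Rmult_1_l. apply Rabs_right. lra.
  - replace ((1 - 2 * 1) * z) with (- z) by ring. rewrite logistic_opp, Rabs_left by lra. ring.
Qed.

Lemma rate_close theta sg xs x eps :
  0 < theta -> Rabs sg = 1 -> Rabs (x - xs) < eps ->
  (theta + 1) * eps <= sg * rate theta xs / 2 -> sg * rate theta xs / 2 <= sg * rate theta x.
Proof.
  intros Hth Hsg Hx Heps.
  assert (E : sg * rate theta x = sg * rate theta xs + sg * ((theta + 1) * (x - xs)))
    by (unfold rate; ring).
  pose proof (Rle_abs (- (sg * ((theta + 1) * (x - xs))))) as Hdev.
  rewrite Rabs_Ropp, !Rabs_mult, Hsg, (Rabs_right (theta + 1)) in Hdev by lra.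
  assert ((theta + 1) * Rabs (x - xs) <= (theta + 1) * eps) by (apply Rmult_le_compat_l; lra).
  lra.
Qed.

Lemma edge_equilibrium_unstable a b c d mu theta xs r0 :
  0 < mu -> 0 < theta -> 0 <= xs <= 1 -> (r0 = 0 \/ r0 = 1) ->
  0 < (1 - 2 * r0) * rate theta xs -> unstable a b c d mu theta xs r0.
Proof.
  intros Hmu Hth Hxs Hr0 Hlam Hstable.
  set (sg := 1 - 2 * r0) in *.
  assert (sg_cases : sg = 1 \/ sg = -1)
    by (unfold sg; destruct Hr0 as [-> | ->]; [left | right]; ring).
  assert (sg_sq : sg * sg = 1) by (destruct sg_cases as [-> | ->]; ring).
  assert (sg_abs : Rabs sg = 1)
    by (destruct sg_cases as [-> | ->]; [apply Rabs_R1 | rewrite Rabs_left; lra]).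
  set (lam := sg * rate theta xs) in *.
  set (eps := Rmin (1 / 2) (lam / (2 * (theta + 1)))).
  assert (eps_pos : 0 < eps) by (apply Rmin_pos; [lra | apply Rdiv_lt_0_compat; lra]).
  assert (eps_half : eps <= 1 / 2) by apply Rmin_l.
  assert (eps_rate : (theta + 1) * eps <= lam / 2).
  { apply Rle_trans with ((theta + 1) * (lam / (2 * (theta + 1)))).
    - apply Rmult_le_compat_l; [lra | apply Rmin_r].
    - right. field. lra. }
  destruct (Hstable eps eps_pos) as [del [Hdel Hstay]].
  destruct (logistic_solution a b c d mu theta xs (sg * ln (del / 2)) Hmu Hxs)
    as [X [Z [HX0 [HZ0 [Hsol [HZc HZd]]]]]].
  assert (start : dist2 (X 0) (logistic (Z 0)) xs r0 < del).
  { rewrite HX0, dist2_vert, HZ0, logistic_dist_to_edge by assumption. fold sg.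
    rewrite <- Rmult_assoc, sg_sq, Rmult_1_l.
    pose proof (logistic_le_exp (ln (del / 2))). rewrite exp_ln in * by lra. lra. }
  assert (in_sq : in_square (X 0) (logistic (Z 0)))
    by (rewrite HX0; pose proof (logistic_range (Z 0)); split; lra).
  specialize (Hstay X (fun t => logistic (Z t)) Hsol in_sq start).
  destruct (eventually_nonneg_of_deriv_ge (fun t => sg * Z t)
              (fun t => sg * rate theta (X t)) (lam / 2) ltac:(lra)
              (fun t => continuity_pt_scal Z sg t (HZc t))
              (fun t Ht => derivable_pt_lim_scal Z sg t _ (HZd t Ht))) as [T [HT HZT]].
  { intros t Ht. apply (rate_close _ _ _ _ eps); try assumption.
    pose proof (dist2_fst (X t) (logistic (Z t)) xs r0). specialize (Hstay t Ht). lra. }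
  pose proof (logistic_ge_half _ HZT).
  specialize (Hstay T HT). pose proof (dist2_snd (X T) (logistic (Z T)) xs r0) as Hr.
  rewrite logistic_dist_to_edge in Hr by assumption. fold sg in Hr. lra.
Qed.

Lemma equilibrium_cubic_antitone P Q x y : 0 < P -> 0 < Q -> 1 / 2 < x -> x <= y -> y < 1 ->
  (2 * x - 1) * (y * (1 - y) * (P * y + Q * (1 - y)))
  <= (2 * y - 1) * (x * (1 - x) * (P * x + Q * (1 - x))).
Proof.
  intros HP HQ Hx Hxy Hy.
  assert (width : y * (1 - y) <= x * (1 - x)) by nra.
  assert (0 <= y * (1 - y)) by nra.
  assert (ratio : (2 * y - 1) * (P * x + Q * (1 - x)) - (2 * x - 1) * (P * y + Q * (1 - y))
                  = (P + Q) * (y - x)) by ring.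
  assert (0 <= (P + Q) * (y - x)) by (apply Rmult_le_pos; lra).
  assert (0 <= (2 * x - 1) * (P * y + Q * (1 - y))) by (apply Rmult_le_pos; nra).
  nra.
Qed.

Lemma equilibrium_beyond P Q mu x x0 : 0 < P -> 0 < Q -> 0 < mu <= 1 -> 0 < x < 1 -> x0 < 1 ->
  x * (1 - x) * (P * x + Q * (1 - x)) = mu * (2 * x - 1) ->
  2 * x0 - 1 < x0 * (1 - x0) * (P * x0 + Q * (1 - x0)) ->
  x0 < x.
Proof.
  intros HP HQ Hmu Hx Hx0 Heq Hx0_big. apply Rnot_le_lt. intros Hle.
  assert (half : 1 / 2 < x).
  { apply Rnot_le_lt. intros Hhalf.
    assert (0 < x * (1 - x) * (P * x + Q * (1 - x))) by (apply Rmult_lt_0_compat; nra).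
    nra. }
  pose proof (equilibrium_cubic_antitone P Q x x0 HP HQ half Hle Hx0) as Hanti.
  rewrite Heq in Hanti.
  assert ((2 * x - 1) * (2 * x0 - 1) < (2 * x - 1) * (x0 * (1 - x0) * (P * x0 + Q * (1 - x0))))
    by (apply Rmult_lt_compat_l; lra).
  assert ((2 * x0 - 1) * (mu * (2 * x - 1)) <= (2 * x0 - 1) * (2 * x - 1))
    by (apply Rmult_le_compat_l; nra).
  nra.
Qed.

Lemma F1_on_r0 a b c d mu x :
  F1 a b c d mu x 0 = x * (1 - x) * (a * x + b * (1 - x)) - mu * (2 * x - 1).
Proof. unfold F1. ring. Qed.

Lemma F1_on_r1 a b c d mu x :
  F1 a b c d mu x 1 = - ((1 - x) * (1 - (1 - x)) * (d * (1 - x) + c * (1 - (1 - x)))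
                         - mu * (2 * (1 - x) - 1)).
Proof. unfold F1. ring. Qed.

Lemma rate_pos_at_r0_equilibrium a b c d mu theta x :
  0 < a -> 0 < b -> 0 < theta -> 0 < mu <= 1 -> 0 < x < 1 ->
  - (theta * a + theta ^ 2 * b) < (theta - 1) * (theta + 1) ^ 2 ->
  F1 a b c d mu x 0 = 0 -> 0 < rate theta x.
Proof.
  intros Ha Hb Hth Hmu Hx Hcond Heq. rewrite F1_on_r0 in Heq.
  set (x0 := / (theta + 1)).
  assert (x0_pos : 0 < x0) by (apply Rinv_0_lt_compat; lra).
  assert (x0_lt : x0 < 1) by (unfold x0; rewrite <- Rinv_1; apply Rinv_lt_contravar; lra).
  assert (cubic : x0 * (1 - x0) * (a * x0 + b * (1 - x0)) - (2 * x0 - 1)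
                  = (theta * a + theta ^ 2 * b + (theta - 1) * (theta + 1) ^ 2) * x0 ^ 3)
    by (unfold x0; field; lra).
  pose proof (pow_lt x0 3 x0_pos).
  pose proof (equilibrium_beyond a b mu x x0 Ha Hb Hmu Hx x0_lt ltac:(lra) ltac:(nra)).
  assert (x0 * (theta + 1) = 1) by (unfold x0; field; lra).
  unfold rate. nra.
Qed.

Lemma rate_neg_at_r1_equilibrium a b c d mu theta x :
  0 < c -> 0 < d -> 0 < theta -> 0 < mu <= 1 -> 0 < x < 1 ->
  (theta - 1) * (theta + 1) ^ 2 < theta * c + theta ^ 2 * d ->
  F1 a b c d mu x 1 = 0 -> rate theta x < 0.
Proof.
  intros Hc Hd Hth Hmu Hx Hcond Heq. rewrite F1_on_r1 in Heq.
  set (y0 := theta / (theta + 1)).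
  assert (y0_pos : 0 < y0) by (apply Rdiv_lt_0_compat; lra).
  assert (y0_lt : y0 < 1)
    by (unfold y0; apply Rmult_lt_reg_r with (theta + 1); [lra|]; unfold Rdiv;
        rewrite Rmult_assoc, Rinv_l, Rmult_1_r, Rmult_1_l by lra; lra).
  assert (cubic : y0 * (1 - y0) * (d * y0 + c * (1 - y0)) - (2 * y0 - 1)
                  = (theta * c + theta ^ 2 * d - (theta - 1) * (theta + 1) ^ 2)
                    * (/ (theta + 1)) ^ 3)
    by (unfold y0; field; lra).
  pose proof (pow_lt (/ (theta + 1)) 3 (Rinv_0_lt_compat (theta + 1) ltac:(lra))).
  pose proof (equilibrium_beyond d c mu (1 - x) y0 Hd Hc Hmu ltac:(split; lra) y0_lt
                ltac:(lra) ltac:(nra)).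
  assert (y0 * (theta + 1) = theta) by (unfold y0; field; lra).
  unfold rate. nra.
Qed.

Theorem lemma12 (a b c d theta : R) :
  0 < a -> 0 < b -> 0 < c -> 0 < d -> 0 < theta ->
  - (theta * a + theta ^ 2 * b) < (theta - 1) * (theta + 1) ^ 2 ->
  (theta - 1) * (theta + 1) ^ 2 < theta * c + theta ^ 2 * d ->
  forall mu : R, 0 < mu <= 1 ->
  forall x r : R,
    on_boundary x r ->
    is_equilibrium a b c d mu theta x r ->
    unstable a b c d mu theta x r.
Proof.
  intros Ha Hb Hc Hd Hth Hlow Hhigh mu Hmu x r [[Hx Hr] Hedge] [Heq1 _].
  assert (x_interior : 0 < x < 1).
  { split; apply Rnot_le_lt; intros Hbad.
    - replace x with 0 in Heq1 by lra. rewrite F1_at_0 in Heq1. lra.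
    - replace x with 1 in Heq1 by lra. rewrite F1_at_1 in Heq1. lra. }
  destruct Hedge as [-> | [-> | [-> | ->]]]; try lra.
  - apply edge_equilibrium_unstable; auto; [lra|].
    rewrite Rmult_0_r, Rminus_0_r, Rmult_1_l.
    apply (rate_pos_at_r0_equilibrium a b c d mu); assumption.
  - apply edge_equilibrium_unstable; auto; [lra|].
    pose proof (rate_neg_at_r1_equilibrium a b c d mu theta x Hc Hd Hth Hmu x_interior Hhigh Heq1).
    lra.
Qed.
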